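(* Let $d,n\ge 1$, $\gamma\in[0,1)$, $\alpha>0$, and $D=3d+2$. Let $\mathbf P,\mathbf V\in\mathbb R^{D\times D}$ be partitioned as $\mathbf P=\begin{bmatrix}\mathbf P_{11}&\mathbf P_{12}\\ \mathbf P_{21}&\mathbf P_{22}\end{bmatrix}$, $\mathbf V=\begin{bmatrix}\mathbf V_{11}&\mathbf V_{12}\\ \mathbf V_{21}&\mathbf V_{22}\end{bmatrix}$ with $\mathbf P_{11},\mathbf V_{11}\in\mathbb R^{(2d+1)\times(2d+1)}$, $\mathbf P_{12},\mathbf V_{12}\in\mathbb R^{(2d+1)\times(d+1)}$, $\mathbf P_{21},\mathbf V_{21}\in\mathbb R^{(d+1)\times(2d+1)}$, $\mathbf P_{22},\mathbf V_{22}\in\mathbb R^{(d+1)\times(d+1)}$, and suppose $$\mathbf P_{12}=\begin{bmatrix}\mathbf 0_{d\times1}&-\mathbf I_d\\ \mathbf 0_{d\times1}&\mathbf I_d\\ 1&\mathbf 0_{1\times d}\end{bmatrix},\quad \mathbf P_{22}=\mathbf 0,$$ the last $d$ rows of $\mathbf V_{21}$ equal $[\alpha\mathbf I_d\;\;\mathbf 0_{d\times d}\;\;\mathbf 0_{d\times1}]$, and the last $d$ rows of $\mathbf V_{22}$ are zero, while $\mathbf P_{11},\mathbf P_{21},\mathbf V_{11},\mathbf V_{12}$ and the first rows of $\mathbf V_{21},\mathbf V_{22}$ are arbitrary. Then for every $c\neq 0$ and every sample $z$ (any feature map, any $\mathbf w\in\mathbb R^d$, any $n$-step trajectory), the transformer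 with parameters $(c\mathbf P,c^{-1}\mathbf V)$ satisfies $\mathsf{TF}_{(c\mathbf P,c^{-1}\mathbf V)}(\mathbf H(z))=\mathbf w_{\mathrm{SARSA}}(z)$.
   Context: A linear self-attention block with parameters $(\mathbf P,\mathbf V)$, $\mathbf P,\mathbf V\in\mathbb R^{D\times D}$, maps an input $\mathbf H\in\mathbb R^{D\times N}$ to $\mathbf H_{\mathrm{out}}=\mathbf H+\frac1n(\mathbf V\mathbf H)(\mathbf H^\top\mathbf P\mathbf H)$, where $n$ is the trajectory length below; the transformer output $\mathsf{TF}_{(\mathbf P,\mathbf V)}(\mathbf H)$ is the vector of the last $d$ entries of the last column of $\mathbf H_{\mathrm{out}}$. A sample $z$ consists of a feature map $\boldsymbol\phi:\mathcal S\times\mathcal A\to\mathbb R^d$, a parameter $\mathbf w\in\mathbb R^d$, and an $n$-step trajectory $(s_0,a_0,r_1,s_1,a_1,\dots,r_n,s_n,a_n)$ with real rewards. Set $\boldsymbol\phi_i=\boldsymbol\phi(s_i,a_i)$, $\boldsymbol\phi_i^+=\boldsymbol\phi(s_{i+1},a_{i+1})$, $\delta_i=r_{i+1}+\gamma\mathbf w^\top\boldsymbol\phi_i^+-\mathbf w^\top\boldsymbol\phi_i$, $\mathbf x_i=[\boldsymbol\phi_i;\gamma\boldsymbol\phi_i^+;r_{i+1}]\in\mathbb R^{2d+1}$ for $i=0,\dots,n-1$, and $\tilde{\mathbf w}=[1;\mathbf w]\in\mathbb R^{d+1}$. The prompt is $\mathbf H(z)=\begin{bmatrix}\mathbf x_0&\cdots&\mathbf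 x_{n-1}&\mathbf 0\\ \mathbf 0&\cdots&\mathbf 0&\tilde{\mathbf w}\end{bmatrix}\in\mathbb R^{D\times(n+1)}$. The batch semi-gradient SARSA update is $\mathbf w_{\mathrm{SARSA}}(z)=\mathbf w+\frac{\alpha}{n}\sum_{i=0}^{n-1}\delta_i\boldsymbol\phi_i$. *)

From HB Require Import structures.
From mathcomp Require Import all_boot all_order all_algebra.
From mathcomp Require Import reals.
Set Implicit Arguments. Unset Strict Implicit. Unset Printing Implicit Defensive.
Import Order.TTheory GRing.Theory Num.Theory.
Local Open Scope ring_scope.

(* Embedding dimension D = 3d+2, written so that the block structure
   (2d+1) + (d+1) and the sub-splittings are visible in the type:
   D = ((d + d) + 1) + (1 + d). *)
Definition Dim (d : nat) : nat := ((d + d) + 1) + (1 + d).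

Section Defs.
Variable R : realType.

Definition Hout (d n : nat) (P V : 'M[R]_(Dim d)) (H : 'M[R]_(Dim d, n + 1))
  : 'M[R]_(Dim d, n + 1) :=
  H + (n%:R)^-1 *: ((V *m H) *m (H^T *m P *m H)).

Definition TF (d n : nat) (P V : 'M[R]_(Dim d)) (H : 'M[R]_(Dim d, n + 1))
  : 'cV[R]_d :=
  dsubmx (dsubmx (col (rshift n (ord0 : 'I_1)) (Hout P V H)) : 'cV[R]_(1 + d)).

Definition dotv (d : nat) (u v : 'cV[R]_d) : R := \sum_(k < d) u k 0 * v k 0.

Section Sample.
Variables (d n : nat) (gamma : R) (S A : Type) (phi : S -> A -> 'cV[R]_d)
  (w : 'cV[R]_d) (s : nat -> S) (a : nat -> A) (r : nat -> R).
(* trajectory (s_0,a_0,r_1,s_1,a_1,...,r_n,s_n,a_n) given by s, a, r *)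

Definition phi_i (i : nat) : 'cV[R]_d := phi (s i) (a i).
Definition phi_plus (i : nat) : 'cV[R]_d := phi (s i.+1) (a i.+1).
Definition td_delta (i : nat) : R :=
  r i.+1 + gamma * dotv w (phi_plus i) - dotv w (phi_i i).
Definition x_i (i : nat) : 'cV[R]_((d + d) + 1) :=
  col_mx (col_mx (phi_i i) (gamma *: phi_plus i)) (r i.+1)%:M.
Definition w_tilde : 'cV[R]_(1 + d) := col_mx 1%:M w.

Definition prompt : 'M[R]_(Dim d, n + 1) :=
  block_mx (\matrix_(i < (d + d) + 1, j < n) x_i j i 0) 0 0 w_tilde.

Definition w_sarsa (alpha : R) : 'cV[R]_d :=
  w + (alpha / n%:R) *: \sum_(i < n) td_delta i *: phi_i i.
End Sample.

(* The fixed block P_12 = [0 -I; 0 I; 1 0] of size (2d+1) x (d+1). *)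
Definition P12_star (d : nat) : 'M[R]_((d + d) + 1, 1 + d) :=
  \matrix_(i, j)
    if (j == 0 :> nat) then (if (i == d + d :> nat) then 1 else 0)
    else if (i < d)%N then (if (i == j.-1 :> nat) then -1 else 0)
    else if (i < d + d)%N then (if (i - d == j.-1)%N then 1 else 0)
    else 0.

End Defs.

From HB Require Import structures.
From mathcomp Require Import all_boot all_order all_algebra.
From mathcomp Require Import reals ring.
Set Implicit Arguments. Unset Strict Implicit. Unset Printing Implicit Defensive.
Import Order.TTheory GRing.Theory Num.Theory.
Local Open Scope ring_scope.

(* The factors c and c^-1 cancel in the attention term, which is bilinear in
   (P, V). Since P22 = 0 and the last column of the prompt H is [0; w~], the
   last column of H^T P H is [X^T u; 0], where X holds the transitions x_i and
   u = P12 w~ = [-w; w; 1]; the entries of X^T u are exactly the TD errors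
   delta_i. The last d rows of V then select alpha times the feature block of
   X, so the last d entries of the last output column are
   w + (alpha / n) sum_i delta_i phi_i. *)

Lemma attention_scale_invariant (R : fieldType) (m1 m2 m3 m4 m5 m6 : nat)
    (c : R) (V : 'M[R]_(m1, m2)) (M : 'M_(m2, m3)) (N : 'M_(m3, m4))
    (P : 'M_(m4, m5)) (K : 'M_(m5, m6)) :
  c != 0 -> (c^-1 *: V) *m M *m (N *m (c *: P) *m K) = V *m M *m (N *m P *m K).
Proof.
move=> c0; rewrite -!scalemxAl -scalemxAr -scalemxAl -scalemxAr scalerA.
by rewrite mulVf ?scale1r.
Qed.

Lemma Hout_scale_invariant (R : realType) (d n : nat) (c : R)
    (P V : 'M[R]_(Dim d)) (H : 'M[R]_(Dim d, n + 1)) :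
  c != 0 -> Hout (c *: P) (c^-1 *: V) H = Hout P V H.
Proof. by move=> c0; rewrite /Hout attention_scale_invariant. Qed.

Section PromptBlocks.
Variables (R : nzRingType) (m k n : nat) (X : 'M[R]_(m, n)) (W : 'cV[R]_k).
Local Notation H := (block_mx X 0 0 W).

Lemma col_last_block_mx : col (rshift n ord0) H = col_mx 0 W.
Proof. by rewrite block_mxEv col_col_mx !colKr !col_id. Qed.

Lemma attention_last_col (P V : 'M[R]_(m + k)) :
  drsubmx P = 0 ->
  col (rshift n ord0) (V *m H *m (H^T *m P *m H))
    = V *m col_mx (X *m X^T *m (ursubmx P *m W)) 0.
Proof.
move=> P22_0.
have PW : P *m col_mx 0 W = col_mx (ursubmx P *m W) 0.
  by rewrite -[P in LHS]submxK mul_block_col P22_0 !mulmx0 mul0mx !add0r.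
rewrite colE -!mulmxA -colE col_last_block_mx PW tr_block_mx !trmx0.
by rewrite !mul_block_col !(mulmx0, mul0mx, addr0, add0r).
Qed.

End PromptBlocks.

Lemma dsubmx_mul_col_mx0 (R : nzRingType) (m1 m2 n1 n2 p : nat)
    (A : 'M[R]_(m1 + m2, n1 + n2)) (Y : 'M_(n1, p)) :
  dsubmx (A *m col_mx Y 0) = dlsubmx A *m Y.
Proof. by rewrite -mul_dsub_mx -[dsubmx A]hsubmxK mul_row_col mulmx0 addr0. Qed.

Lemma mulmx_cols_col (R : comNzRingType) (d n : nat) (f : nat -> 'cV[R]_d)
    (v : nat -> R) :
  (\matrix_(i < d, j < n) f j i 0) *m (\col_(j < n) v j) = \sum_(j < n) v j *: f j.
Proof.
apply/matrixP => i z; rewrite (ord1 z) !mxE summxE.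
by apply: eq_bigr => j _; rewrite !mxE mulrC.
Qed.

Lemma identity_selector_entry (R : nzRingType) (d : nat)
    (i : 'I_d) (j : 'I_((d + d) + 1)) :
  (row_mx (row_mx 1%:M 0) 0 : 'M[R]_(d, (d + d) + 1)) i j = (j == i :> nat)%:R.
Proof.
rewrite -(splitK j); case: (split j) => [j1|j2] /=.
- rewrite row_mxEl -(splitK j1); case: (split j1) => [k|k] /=.
  + by rewrite row_mxEl mxE eq_sym.
  + by rewrite row_mxEr mxE gtn_eqF // ltn_addr.
- by rewrite row_mxEr mxE gtn_eqF // !ltn_addr.
Qed.

Lemma dsubmx_selector (R : nzRingType) (d : nat) (alpha : R)
    (M : 'M[R]_(1 + d, (d + d) + 1)) :
  (forall (i : 'I_(1 + d)) j, (0 < i)%N ->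
     M i j = if (j == i.-1 :> nat) then alpha else 0) ->
  dsubmx M = alpha *: row_mx (row_mx 1%:M 0) 0.
Proof.
move=> hM; apply/matrixP => i j.
rewrite mxE hM //= mxE identity_selector_entry.
by case: eqP; rewrite ?mulr1 ?mulr0.
Qed.

Lemma P12_star_block (R : realType) (d : nat) :
  P12_star R d = block_mx 0 (col_mx (- 1%:M) 1%:M) 1%:M 0.
Proof.
apply/matrixP => i j; rewrite -(splitK i) -(splitK j).
case: (split i) => [i1|i2]; case: (split j) => [j1|j2];
  rewrite /= ?block_mxEul ?block_mxEur ?block_mxEdl ?block_mxEdr mxE /=.
- rewrite (ord1 j1) /= mxE -(splitK i1); case: (split i1) => k /=.
  + by rewrite ltn_eqF // ltn_addr.
  + by rewrite ltn_eqF // ltn_add2l.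
- rewrite add0n -(splitK i1); case: (split i1) => k /=.
  + rewrite col_mxEu !mxE (ltn_ord k).
    by case: (k =P j2) => [->|/eqP ne]; rewrite ?eqxx // ifN // mulr0n oppr0.
  + rewrite col_mxEd !mxE ltnNge leq_addr /= ltn_add2l (ltn_ord k) addKn.
    by case: (k =P j2) => [->|/eqP ne]; rewrite ?eqxx // ifN // mulr0n.
- by rewrite (ord1 i2) (ord1 j1) !mxE addn0 !eqxx.
- by rewrite (ord1 i2) mxE addn0 ltnNge leq_addr /= ltnn.
Qed.

Lemma P12_star_mul_w_tilde (R : realType) (d : nat) (w : 'cV[R]_d) :
  P12_star R d *m w_tilde w = col_mx (col_mx (- w) w) 1%:M.
Proof.
rewrite P12_star_block /w_tilde mul_block_col !mul0mx mul1mx add0r addr0.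
by rewrite mul_col_mx mulNmx !mul1mx.
Qed.

Section Sample.
Variables (R : realType) (d n : nat) (gamma : R) (S A : Type)
  (phi : S -> A -> 'cV[R]_d) (w : 'cV[R]_d)
  (s : nat -> S) (a : nat -> A) (r : nat -> R).

Local Notation features :=
  (\matrix_(i < (d + d) + 1, j < n) x_i gamma phi s a r j i 0).

Lemma features_col_mx :
  features = col_mx (col_mx (\matrix_(i < d, j < n) phi_i phi s a j i 0)
                            (\matrix_(i < d, j < n) (gamma *: phi_plus phi s a j) i 0))
                    (\matrix_(i < 1, j < n) r j.+1).
Proof.
apply/matrixP => i j; rewrite !mxE.
case: (split i) => k; last by rewrite (ord1 k) !mxE eqxx mulr1n.
by rewrite !mxE; case: (split k) => l; rewrite !mxE.
Qed.

Lemma features_tr_mul_td :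
  features^T *m col_mx (col_mx (- w) w) 1%:M
    = \col_(j < n) td_delta gamma phi w s a r j.
Proof.
rewrite features_col_mx !tr_col_mx !mul_row_col mulmx1.
apply/matrixP => j z; rewrite (ord1 z) !mxE /td_delta /dotv.
rewrite -sumrN mulr_sumr [RHS]addrC [r _ + _]addrC [RHS]addrA.
by congr (_ + _ + _); apply: eq_bigr => k _; rewrite !mxE; ring.
Qed.

Lemma selector_mul_features :
  row_mx (row_mx 1%:M 0) 0 *m features = \matrix_(i < d, j < n) phi_i phi s a j i 0.
Proof.
by rewrite features_col_mx !mul_row_col mul1mx !mul0mx !addr0.
Qed.

End Sample.

Theorem theorem1 (R : realType) (d n : nat) (gamma alpha : R)
  (hd : (1 <= d)%N) (hn : (1 <= n)%N)
  (hg0 : 0 <= gamma) (hg1 : gamma < 1) (ha : 0 < alpha)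
  (P V : 'M[R]_(Dim d))
  (hP12 : ursubmx P = P12_star R d)
  (hP22 : drsubmx P = 0)
  (hV21 : forall (i : 'I_(1 + d)) (j : 'I_((d + d) + 1)), (0 < i)%N ->
            dlsubmx V i j = if (j == i.-1 :> nat) then alpha else 0)
  (hV22 : forall (i : 'I_(1 + d)) (j : 'I_(1 + d)), (0 < i)%N ->
            drsubmx V i j = 0) :
  forall (c : R), c != 0 ->
  forall (S A : Type) (phi : S -> A -> 'cV[R]_d) (w : 'cV[R]_d)
         (s : nat -> S) (a : nat -> A) (r : nat -> R),
    TF (c *: P) (c^-1 *: V) (prompt n gamma phi w s a r)
    = w_sarsa n gamma phi w s a r alpha.
Proof.
(* Only the block constraints on P and V matter; for n = 0 both sides are w,
   as 0^-1 = 0 in a field. *)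
move=> c c0 S A phi w s a r.
rewrite /TF Hout_scale_invariant // /Hout /prompt linearD linearZ /=.
rewrite col_last_block_mx attention_last_col // hP12 P12_star_mul_w_tilde.
rewrite !linearD !linearZ /= col_mxKd dsubmx_mul_col_mx0 -mul_dsub_mx.
rewrite (dsubmx_selector hV21) /w_tilde col_mxKd -mulmxA features_tr_mul_td.
rewrite -scalemxAl mulmxA selector_mul_features mulmx_cols_col.
by rewrite /w_sarsa scalerA mulrC.
Qed.
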